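(* Let $\phi$ be a pre-trained model with performance metric $\mathcal{M}(\cdot)$, and let $f_1(\cdot)$ and $f_2(\cdot)$ be two compression methods with respective granularities $t^{*}_{f_1}$ and $t^{*}_{f_2}$, such that disjoint selectivity holds. Assume (i) layer-wise independence: for all layers $l_i \neq l_j$ of $\phi$, $\partial\, \mathcal{E}_f(l_i)/\partial\, \mathcal{E}_f(l_j) = 0$; and (ii) error–performance trade-off: there exists $\beta>0$ such that for every compression $f$ (including compositions of $f_1,f_2$), $\mathcal{M}(\phi) - \mathcal{M}(f(\phi)) = \beta \sum_{u} \|\mathcal{E}_f(u)\|_F^2$, the sum running over the units of $\phi$. Then the compression order advantage satisfies $$\mathcal{A}(f_1 \rightarrow f_2) = \mathcal{M}((f_2\circ f_1)(\phi)) - \mathcal{M}((f_1\circ f_2)(\phi)) = \beta\Big(\sum_{u_i\in \mathbb{G}_2} g(u_i) - \sum_{u_i \in \mathbb{G}_1} g(u_i)\Big),$$ where $g(u_i) = \|\mathcal{E}_{f_1}(u_i)\|_F^2 - \|\mathcal{E}_{f_2}(u_i)\|_F^2$, $\mathbb{G}_1 = \{u : \mathbb{1}_{f_1}(u; f_2\circ f_1)=1,\ \mathbb{1}_{f_1}(u; f_1\circ f_2) = 0\}$ and $\mathbb{G}_2 = \{u : \mathbb{1}_{f_1}(u; f_2\circ f_1)=0,\ \mathbb{1}_{f_1}(u; f_1\circ f_2) = 1\}$, with $u$ ranging over the units of $\phi$ at type $t_{\mathrm{lut}}(t^{*}_{f_1}, t^{*}_{f_2})$.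
   Context: A model $\phi$ is abstracted into a set $\mathbb{T}_\phi$ of abstract types (structural component types such as layers, sublayers, attention heads); type $t_1$ is larger than $t_2$ if $t_1$ strictly contains $t_2$ as a structural unit, and the least upper type $t_{\mathrm{lut}}(t_1,t_2)$ is the smallest type larger than (or containing) both. $\mathbb{U}(\phi;t)$ denotes the set of all units of $\phi$ of type $t$. A compression method $f$ operates on a subset $\mathbb{T}_f\subseteq\mathbb{T}_\phi$ of types; its granularity $t^{*}_f$ is the structurally smallest type in $\mathbb{T}_f$. Applying $f_1$ then $f_2$ is written $f_1\rightarrow f_2$ or $f_2\circ f_1$. For an order $\pi\in\{f_1\circ f_2, f_2\circ f_1\}$, $\mathbb{1}_f(u;\pi)\in\{0,1\}$ indicates whether method $f$ modifies unit $u$ under order $\pi$. Disjoint selectivity holds if for every $u\in\mathbb{U}(\phi; t_{\mathrm{lut}}(t^{*}_{f_1},t^{*}_{f_2}))$ and every $\pi\in\{f_1\circ f_2, f_2\circ f_1\}$, $\mathbb{1}_{f_1}(u;\pi)+\mathbb{1}_{f_2}(u;\pi)=1$. $\mathcal{E}_f(u)$ denotes the reconstruction error on unit $u$ (deviation of the compressed output from the original output, e.g. $f(W)f(X)-WX$ for a layer with weight $W$ and activation $X$) after applying $f$. The metric $\mathcal{M}$ is such that higher is better. *)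

From mathcomp Require Import all_boot all_order all_algebra.
Set Implicit Arguments. Unset Strict Implicit. Unset Printing Implicit Defensive.
Import Order.TTheory GRing.Theory Num.Theory.
Local Open Scope ring_scope.

(* The two application orders pi in {f2 o f1, f1 o f2}.
   O21 = f2 o f1 (apply f1 first, then f2, i.e. f1 -> f2);
   O12 = f1 o f2 (apply f2 first, then f1, i.e. f2 -> f1). *)
Inductive comp_order := O21 | O12.

Definition comp_of {Phi : Type} (f1 f2 : Phi -> Phi) (pi : comp_order) : Phi -> Phi :=
  match pi with O21 => f2 \o f1 | O12 => f1 \o f2 end.

Definition frob2 {R : numDomainType} {m n : nat} (A : 'M[R]_(m, n)) : R :=
  \sum_(i < m) \sum_(j < n) A i j ^+ 2.

(* Disjoint selectivity: on every unit of type t_lut and for every order,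
   exactly one of the two methods modifies the unit.
   ind1 pi u = 1_{f1}(u; pi), ind2 pi u = 1_{f2}(u; pi). *)
Definition disjoint_selectivity {U : Type} (ind1 ind2 : comp_order -> U -> bool) : Prop :=
  forall (u : U) (pi : comp_order), (ind1 pi u : nat) + (ind2 pi u : nat) = 1%N.

(* Under disjoint selectivity every unit is compressed by exactly one of the
   two methods, so by layer-wise independence the error of either composition
   on a unit is the f1-error or the f2-error according to 1_{f1}.  Subtracting
   the two trade-off identities, the units on which both orders agree cancel,
   and only G_2 (contributing g) and G_1 (contributing -g) remain. *)
From mathcomp Require Import all_boot all_order all_algebra.
Set Implicit Arguments.
Unset Strict Implicit.
Unset Printing Implicit Defensive.

Import Order.TTheory GRing.Theory Num.Theory.
Local Open Scope ring_scope.

Lemma disjoint_selectivity_ind2 (U : Type) (ind1 ind2 : comp_order -> U -> bool) :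
  disjoint_selectivity ind1 ind2 -> forall pi u, ind2 pi u = ~~ ind1 pi u.
Proof. by move=> hsel pi u; move: (hsel u pi); case: (ind1 pi u); case: (ind2 pi u). Qed.

Lemma sumr_selectB (V : zmodType) (I : finType) (p q : pred I) (a b : I -> V) :
  \sum_i (if q i then a i else b i) - \sum_i (if p i then a i else b i) =
  \sum_(i | ~~ p i && q i) (a i - b i) - \sum_(i | p i && ~~ q i) (a i - b i).
Proof.
rewrite -sumrB [in RHS]big_mkcond [X in _ - X]big_mkcond -sumrB.
by apply: eq_bigr => i _; case: (p i); case: (q i); rewrite ?subrr ?subr0 ?sub0r ?opprB.
Qed.

Section CompositionError.

Variables (R : numDomainType) (Phi : Type) (f1 f2 : Phi -> Phi) (U : Type).
Variables (rows cols : U -> nat) (Err : (Phi -> Phi) -> forall u, 'M[R]_(rows u, cols u)).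
Variables (ind1 ind2 : comp_order -> U -> bool).
Hypothesis hsel : disjoint_selectivity ind1 ind2.
Hypothesis hind1 : forall pi u, ind1 pi u -> ~~ ind2 pi u ->
  Err (comp_of f1 f2 pi) u = Err f1 u.
Hypothesis hind2 : forall pi u, ind2 pi u -> ~~ ind1 pi u ->
  Err (comp_of f1 f2 pi) u = Err f2 u.

Lemma frob2_Err_comp pi u :
  frob2 (Err (comp_of f1 f2 pi) u) =
  if ind1 pi u then frob2 (Err f1 u) else frob2 (Err f2 u).
Proof.
have sel2 := disjoint_selectivity_ind2 hsel pi u.
by case h1: (ind1 pi u); [rewrite hind1 | rewrite hind2]; rewrite ?sel2 ?h1.
Qed.

End CompositionError.

Theorem theorem1
  (R : realFieldType)
  (Phi : Type)                       (* models *)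
  (phi : Phi)                        (* the pre-trained model *)
  (M : Phi -> R)                     (* performance metric, higher is better *)
  (f1 f2 : Phi -> Phi)               (* the two compression methods *)
  (U : finType)                      (* units U(phi; t_lut(t*_f1, t*_f2)) *)
  (rows cols : U -> nat)             (* shape of each unit's output *)
  (Err : (Phi -> Phi) -> forall u : U, 'M[R]_(rows u, cols u))
                                     (* Err f u = E_f(u) *)
  (ind1 ind2 : comp_order -> U -> bool)   (* indicators 1_{f1}(u; pi), 1_{f2}(u; pi) *)
  (beta : R)
  (hsel : disjoint_selectivity ind1 ind2)
  (* (i) layer-wise independence: the error of a composed compression on a unit
     is the error of the (unique) method that modifies that unit *)
  (hind1 : forall (pi : comp_order) (u : U), ind1 pi u -> ~~ ind2 pi u ->
             Err (comp_of f1 f2 pi) u = Err f1 u)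
  (hind2 : forall (pi : comp_order) (u : U), ind2 pi u -> ~~ ind1 pi u ->
             Err (comp_of f1 f2 pi) u = Err f2 u)
  (* (ii) error-performance trade-off *)
  (hbeta : 0 < beta)
  (htrade : forall f : Phi -> Phi,
      (f = f1 \/ f = f2 \/ f = f2 \o f1 \/ f = f1 \o f2) ->
      M phi - M (f phi) = beta * \sum_(u : U) frob2 (Err f u)) :
  let g := fun u : U => frob2 (Err f1 u) - frob2 (Err f2 u) in
  M ((f2 \o f1) phi) - M ((f1 \o f2) phi) =
    beta * (\sum_(u : U | ~~ ind1 O21 u && ind1 O12 u) g u
            - \sum_(u : U | ind1 O21 u && ~~ ind1 O12 u) g u).
Proof.
move=> g.
have -> : M ((f2 \o f1) phi) - M ((f1 \o f2) phi) =
    (M phi - M ((f1 \o f2) phi)) - (M phi - M ((f2 \o f1) phi)).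
  by rewrite opprB [RHS]addrC subrKA.
rewrite (htrade (f1 \o f2)); last by do 3 right.
rewrite (htrade (f2 \o f1)); last by do 2 right; left.
rewrite -mulrBr -[f1 \o f2]/(comp_of f1 f2 O12) -[f2 \o f1]/(comp_of f1 f2 O21).
have frob2E := frob2_Err_comp hsel hind1 hind2.
by under eq_bigr do rewrite frob2E; under [X in _ - X]eq_bigr do rewrite frob2E;
  rewrite sumr_selectB.
Qed.
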